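(* There is no nonnegative bivariate information decomposition $(SI,UI,CI)$ in which $UI$ satisfies the Blackwell property and $SI$ satisfies left monotonicity.
   Context: All random variables have finite alphabets. A nonnegative bivariate information decomposition consists of nonnegative functions $SI(S;X_1,X_2)$, $UI(S;X_1\setminus X_2)$, $UI(S;X_2\setminus X_1)$, $CI(S;X_1,X_2)$, defined for every joint distribution of $(S,X_1,X_2)$ with arbitrary finite alphabets and depending continuously on it, such that $I(S;X_1X_2)=SI(S;X_1,X_2)+CI(S;X_1,X_2)+UI(S;X_1\setminus X_2)+UI(S;X_2\setminus X_1)$, $I(S;X_1)=SI(S;X_1,X_2)+UI(S;X_1\setminus X_2)$ and $I(S;X_2)=SI(S;X_1,X_2)+UI(S;X_2\setminus X_1)$, where $I$ denotes mutual information. $UI$ has the Blackwell property if for every joint distribution $P_{SX_1X_2}$: $UI(S;X_1\setminus X_2)=0$ if and only if there exists a random variable $X_1'$ such that $S - X_2 - X_1'$ is a Markov chain and $P_{SX_1'}=P_{SX_1}$. $SI$ satisfies left monotonicity if $SI(S;X_1,X_2)\ge SI(f(S);X_1,X_2)$ for all $(S,X_1,X_2)$ and every function $f$ on the alphabet of $S$. *)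

From HB Require Import structures.
From mathcomp Require Import all_boot all_order all_algebra.
From mathcomp Require Import all_classical all_reals all_analysis.
Set Implicit Arguments. Unset Strict Implicit. Unset Printing Implicit Defensive.
Import Order.TTheory GRing.Theory Num.Theory.
Local Open Scope ring_scope.

Section InfoDefs.
Variable R : realType.

Definition is_dist (T : finType) (p : {ffun T -> R}) : Prop :=
  (forall t, 0 <= p t) /\ \sum_(t : T) p t = 1.

Definition dmap (T U : finType) (f : T -> U) (p : {ffun T -> R}) : {ffun U -> R} :=
  [ffun u => \sum_(t : T | f t == u) p t].

Definition mutinfo (A B : finType) (p : {ffun A * B -> R}) : R :=
  let pA := dmap (fun ab : A * B => ab.1) p in
  let pB := dmap (fun ab : A * B => ab.2) p in
  \sum_(ab : A * B)
    (if p ab == 0 then 0 else p ab * ln (p ab / (pA ab.1 * pB ab.2))).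

Definition pS_X1X2 (S X1 X2 : finType) (p : {ffun S * X1 * X2 -> R})
  : {ffun S * (X1 * X2) -> R} :=
  dmap (fun t : S * X1 * X2 => (t.1.1, (t.1.2, t.2))) p.
Definition pS_X1 (S X1 X2 : finType) (p : {ffun S * X1 * X2 -> R})
  : {ffun S * X1 -> R} :=
  dmap (fun t : S * X1 * X2 => (t.1.1, t.1.2)) p.
Definition pS_X2 (S X1 X2 : finType) (p : {ffun S * X1 * X2 -> R})
  : {ffun S * X2 -> R} :=
  dmap (fun t : S * X1 * X2 => (t.1.1, t.2)) p.

Definition swap12 (S X1 X2 : finType) (p : {ffun S * X1 * X2 -> R})
  : {ffun S * X2 * X1 -> R} :=
  dmap (fun t : S * X1 * X2 => (t.1.1, t.2, t.1.2)) p.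

Definition markov (A B C : finType) (q : {ffun A * B * C -> R}) : Prop :=
  forall a b c,
    q (a, b, c) * dmap (fun t : A * B * C => t.1.2) q b
    = dmap (fun t : A * B * C => t.1) q (a, b)
      * dmap (fun t : A * B * C => (t.1.2, t.2)) q (b, c).

Definition cont_on_dists (T : finType) (F : {ffun T -> R} -> R) : Prop :=
  forall p, is_dist p -> forall e : R, 0 < e -> exists2 d : R, 0 < d &
    forall q, is_dist q -> (forall t, `|p t - q t| < d) -> `|F p - F q| < e.

End InfoDefs.

(* For UI, [UI S X1 X2 p] is UI(S; X1 \ X2); UI(S; X2 \ X1) is
   [UI S X2 X1 (swap12 p)]. *)
Definition infofun (R : realType) :=
  forall S X1 X2 : finType, {ffun S * X1 * X2 -> R} -> R.

Section Decomp.
Variable R : realType.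

Definition nonneg_decomposition (SI UI CI : infofun R) : Prop :=
  forall (S X1 X2 : finType) (p : {ffun S * X1 * X2 -> R}), is_dist p ->
  (0 <= SI S X1 X2 p /\ 0 <= CI S X1 X2 p /\
   0 <= UI S X1 X2 p /\ 0 <= UI S X2 X1 (swap12 p)) /\
  (mutinfo (pS_X1X2 p) =
     SI S X1 X2 p + CI S X1 X2 p + UI S X1 X2 p + UI S X2 X1 (swap12 p) /\
   mutinfo (pS_X1 p) = SI S X1 X2 p + UI S X1 X2 p /\
   mutinfo (pS_X2 p) = SI S X1 X2 p + UI S X2 X1 (swap12 p)).

Definition continuous_decomposition (SI UI CI : infofun R) : Prop :=
  forall S X1 X2 : finType,
    [/\ cont_on_dists (SI S X1 X2), cont_on_dists (CI S X1 X2)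
      & cont_on_dists (UI S X1 X2)].

(* Blackwell property: UI(S;X1\X2) = 0 iff there is a random variable X1'
   (jointly distributed with (S,X1,X2), values in the alphabet of X1) such that
   S - X2 - X1' is a Markov chain and P_{S X1'} = P_{S X1}. The joint law of
   (S, X1, X2, X1') is q. *)
Definition blackwell (UI : infofun R) : Prop :=
  forall (S X1 X2 : finType) (p : {ffun S * X1 * X2 -> R}), is_dist p ->
  (UI S X1 X2 p = 0 <->
   exists q : {ffun S * X1 * X2 * X1 -> R},
     [/\ is_dist q,
         dmap (fun t : S * X1 * X2 * X1 => t.1) q = p,
         markov (dmap (fun t : S * X1 * X2 * X1 => (t.1.1.1, t.1.2, t.2)) q) &
         dmap (fun t : S * X1 * X2 * X1 => (t.1.1.1, t.2)) q = pS_X1 p]).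

Definition left_monotone (SI : infofun R) : Prop :=
  forall (S S' X1 X2 : finType) (f : S -> S') (p : {ffun S * X1 * X2 -> R}),
    is_dist p ->
    SI S' X1 X2 (dmap (fun t : S * X1 * X2 => (f t.1.1, t.1.2, t.2)) p)
      <= SI S X1 X2 p.

End Decomp.

From Pilot Require Import Defs.
From mathcomp Require Import all_boot all_order all_algebra.
From mathcomp Require Import all_classical all_reals all_analysis.
From mathcomp Require Import lra.
Set Implicit Arguments. Unset Strict Implicit. Unset Printing Implicit Defensive.
Import Order.TTheory GRing.Theory Num.Theory.
Local Open Scope ring_scope.

(* Let S = (A, B) with A, B independent fair bits, let X1 be a noisy copy of A
   (equal to A with probability 3/4), and let X2 = A if B = 0 and an independent
   fair bit if B = 1.  Then X2 is a noisy copy of A exactly like X1, so the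
   Blackwell property gives UI(A; X1 \ X2) = 0, i.e. SI(A; X1, X2) = I(A; X1).
   As B is independent of (A, X1), I(S; X1) = I(A; X1), and left monotonicity
   forces UI(S; X1 \ X2) = 0.  But for B = 1 the variable X2 carries no
   information on A while X1 does, so no garbling of X2 reproduces the joint
   law of (S, X1), contradicting the Blackwell property. *)

Section Pushforward.
Variable R : realType.

Lemma sum_pair (T1 T2 : finType) (F : T1 * T2 -> R) :
  \sum_(t : T1 * T2) F t = \sum_(x : T1) \sum_(y : T2) F (x, y).
Proof. by rewrite pair_big; apply: eq_bigr => -[]. Qed.

Lemma dmap_comp (T U V : finType) (g : T -> U) (f : U -> V) (p : {ffun T -> R}) :
  dmap f (dmap g p) = dmap (f \o g) p.
Proof.
apply/ffunP => v; rewrite !ffunE.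
rewrite [RHS](partition_big g (fun u => f u == v)) //.
apply: eq_bigr => u /eqP fu; rewrite ffunE; apply: eq_bigl => t /=.
by case: eqP => [->|]; rewrite ?fu ?eqxx ?andbF.
Qed.

Lemma dmap_id (T : finType) (p : {ffun T -> R}) : dmap id p = p.
Proof. by apply/ffunP => t; rewrite ffunE big_pred1_eq. Qed.

Lemma dmap_ge0 (T U : finType) (f : T -> U) (p : {ffun T -> R}) :
  (forall t, 0 <= p t) -> forall u, 0 <= dmap f p u.
Proof. by move=> p_ge0 u; rewrite ffunE sumr_ge0. Qed.

Lemma dmap_dist (T U : finType) (f : T -> U) (p : {ffun T -> R}) :
  is_dist p -> is_dist (dmap f p).
Proof.
move=> [p_ge0 p_sum1]; split; first exact: dmap_ge0.
rewrite -p_sum1 (partition_big f xpredT) //.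
by apply: eq_bigr => u _; rewrite ffunE.
Qed.

Lemma dmap_le (T U : finType) (f : T -> U) (p : {ffun T -> R}) :
  (forall t, 0 <= p t) -> forall t, p t <= dmap f p (f t).
Proof.
move=> p_ge0 t; rewrite ffunE (bigD1 t) //= lerDl.
by apply: sumr_ge0 => *; apply: p_ge0.
Qed.

Lemma dmap_dup (T U V : finType) (f : T -> U) (h : U -> V) (p : {ffun T -> R}) u v :
  dmap (fun t => (f t, h (f t))) p (u, v) = (v == h u)%:R * dmap f p u.
Proof.
rewrite !ffunE; have [->|neq] := eqP; rewrite ?mul1r ?mul0r.
  by apply: eq_bigl => t; rewrite xpair_eqE; case: eqP => // ->; rewrite eqxx.
by apply: big1 => t /eqP [fu hv]; case: neq; rewrite -hv -fu.
Qed.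

End Pushforward.

Section PairMarginals.
Variables (R : realType) (T U : finType) (p : {ffun T * U -> R}).

Lemma dmap_fst x : dmap (fun t => t.1) p x = \sum_y p (x, y).
Proof.
rewrite ffunE (reindex_onto (fun y => (x, y)) snd) /=.
  by apply: eq_bigl => y; rewrite !eqxx.
by move=> [x' y] /eqP /= ->.
Qed.

Lemma dmap_snd y : dmap (fun t => t.2) p y = \sum_x p (x, y).
Proof.
rewrite ffunE (reindex_onto (fun x => (x, y)) fst) /=.
  by apply: eq_bigl => x; rewrite !eqxx.
by move=> [x y'] /eqP /= ->.
Qed.

End PairMarginals.

Section MarkovChain.
Variables (R : realType) (A B C : finType) (q : {ffun A * B * C -> R}).
Hypothesis q_ge0 : forall t, 0 <= q t.

Lemma dmap_AC_sum a c :
  dmap (fun t : A * B * C => (t.1.1, t.2)) q (a, c) = \sum_b q (a, b, c).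
Proof.
rewrite ffunE (reindex_onto (fun b => (a, b, c)) (fun t => t.1.2)) /=.
  by apply: eq_bigl => b; rewrite !eqxx.
by move=> [[a' b] c'] /eqP [-> ->].
Qed.

(* If the middle marginal vanishes at [b], both sides are 0 (recall [x / 0 = 0]). *)
Lemma markov_entry : Defs.markov q -> forall a b c,
  q (a, b, c) = dmap (fun t => t.1) q (a, b)
    * (dmap (fun t => (t.1.2, t.2)) q (b, c) / dmap (fun t => t.1.2) q b).
Proof.
move=> qM a b c; set qB := dmap _ q b.
have [qB0|qB_neq0] := eqVneq qB 0.
  rewrite qB0 invr0 !mulr0; apply/eqP; rewrite eq_le q_ge0 andbT -qB0.
  exact: (dmap_le (fun t : A * B * C => t.1.2) q_ge0 (a, b, c)).
by rewrite -(mulfK qB_neq0 (q _)) qM mulrA.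
Qed.

Lemma markov_rows_eq a a' : Defs.markov q ->
  (forall b, dmap (fun t => t.1) q (a, b) = dmap (fun t => t.1) q (a', b)) ->
  forall c, dmap (fun t => (t.1.1, t.2)) q (a, c)
          = dmap (fun t => (t.1.1, t.2)) q (a', c).
Proof.
move=> qM rows c; rewrite !dmap_AC_sum; apply: eq_bigr => b _.
by rewrite !(markov_entry qM) rows.
Qed.

End MarkovChain.

Lemma mutinfo_add_indep (R : realType) (A B C : finType) (u : B -> R)
    (r : {ffun A * C -> R}) :
  \sum_b u b = 1 ->
  mutinfo [ffun t : A * B * C => u t.1.2 * r (t.1.1, t.2)] = mutinfo r.
Proof.
move=> u_sum1; set p := [ffun _ => _].
set rA := dmap (fun t => t.1) r; set rC := dmap (fun t => t.2) r.
have pAB a b : dmap (fun t => t.1) p (a, b) = u b * rA a.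
  by rewrite dmap_fst /rA dmap_fst mulr_sumr; apply: eq_bigr => c _; rewrite ffunE.
have pC c : dmap (fun t => t.2) p c = rC c.
  rewrite dmap_snd /rC dmap_snd sum_pair; apply: eq_bigr => a _.
  by rewrite -[RHS]mul1r -u_sum1 mulr_suml; apply: eq_bigr => b _; rewrite ffunE mulrC.
have term a b c : (if p (a, b, c) == 0 then 0
      else p (a, b, c) * ln (p (a, b, c) / (u b * rA a * rC c)))
    = u b * (if r (a, c) == 0 then 0 else r (a, c) * ln (r (a, c) / (rA a * rC c))).
  rewrite ffunE /=; have [->|u_neq0] := eqVneq (u b) 0; first by rewrite !mul0r eqxx.
  rewrite mulf_eq0 (negbTE u_neq0) /=; case: eqP => _; first by rewrite mulr0.
  have -> : u b * r (a, c) / (u b * rA a * rC c) = r (a, c) / (rA a * rC c).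
    by rewrite -(mulrA (u b) (rA a)) invfM mulrACA mulfV ?mul1r.
  by rewrite mulrA.
rewrite /mutinfo /= (sum_pair (T1 := (A * B)%type)) (sum_pair (T1 := A)).
rewrite [RHS](sum_pair (T1 := A)); apply: eq_bigr => a _.
under eq_bigr => b _ do under eq_bigr => c _ do rewrite /= pAB pC term.
rewrite -[RHS]mul1r -u_sum1 mulr_suml; apply: eq_bigr => b _.
by rewrite mulr_sumr.
Qed.

Section Blackwell.
Variable R : realType.

Lemma markov_dup (T A B : finType) (f : T -> A) (h : T -> B) (p : {ffun T -> R}) :
  Defs.markov (dmap (fun t => (f t, h t, h t)) p).
Proof.
move=> a b c; set r := dmap _ p.
have r_B : dmap (fun t => t.1.2) r b = dmap h p b by rewrite dmap_comp.
have r_AB : dmap (fun t => t.1) r (a, b) = dmap (fun t => (f t, h t)) p (a, b).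
  by rewrite dmap_comp.
have r_BC : dmap (fun t => (t.1.2, t.2)) r (b, c) = (c == b)%:R * dmap h p b.
  by rewrite dmap_comp (dmap_dup h id).
have r_ABC : r (a, b, c) = (c == b)%:R * dmap (fun t => (f t, h t)) p (a, b).
  exact: (dmap_dup (fun t => (f t, h t)) snd).
by rewrite r_B r_AB r_BC r_ABC mulrCA mulrA.
Qed.

Lemma blackwell_UI_eq0_same_channel (UI : infofun R) (S X : finType)
    (p : {ffun S * X * X -> R}) :
  blackwell UI -> is_dist p -> pS_X1 p = pS_X2 p -> UI S X X p = 0.
Proof.
move=> bw p_dist same; apply/(bw _ _ _ p p_dist).
exists (dmap (fun t => (t, t.2)) p); split.
- exact: dmap_dist.
- by rewrite dmap_comp dmap_id.
- by rewrite dmap_comp; apply: markov_dup.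
- by rewrite dmap_comp same.
Qed.

Lemma blackwell_UI_eq0_rows (UI : infofun R) (S X1 X2 : finType)
    (p : {ffun S * X1 * X2 -> R}) :
  blackwell UI -> is_dist p -> UI S X1 X2 p = 0 ->
  forall s s', (forall x2, pS_X2 p (s, x2) = pS_X2 p (s', x2)) ->
  forall x1, pS_X1 p (s, x1) = pS_X1 p (s', x1).
Proof.
move=> bw p_dist /(bw _ _ _ p p_dist) [q [[q_ge0 _] q_p rM q_SX1]] s s' rows x1.
set r := dmap _ q in rM.
have r_AB : dmap (fun t => t.1) r = pS_X2 p by rewrite -q_p /pS_X2 !dmap_comp.
have r_AC : dmap (fun t => (t.1.1, t.2)) r = pS_X1 p by rewrite -q_SX1 dmap_comp.
rewrite -r_AC; apply: markov_rows_eq rM _ x1; first exact: dmap_ge0.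
by move=> x2; rewrite r_AB.
Qed.

End Blackwell.

Section Example.
Variable R : realType.

Definition noisy_copy (a x : bool) : R := if x == a then 3/4 else 1/4.

Definition law_S : {ffun bool * bool * bool * bool -> R} :=
  [ffun t => let: (a, b, x1, x2) := t in
     1/4 * noisy_copy a x1 * (if b then 1/2 else if x2 == a then 1 else 0)].

Definition law_A := dmap (fun t : bool * bool * bool * bool => (t.1.1.1, t.1.2, t.2)) law_S.

Ltac compute_marginals :=
  rewrite /pS_X1 /pS_X2 /law_A /dmap;
  repeat rewrite ?ffunE ?big_mkcond ?sum_pair ?big_bool /=;
  rewrite /noisy_copy /=.

Lemma law_S_dist : is_dist law_S.
Proof.
split; last by compute_marginals; lra.
by move=> [[[[] []] []] []]; rewrite ffunE /noisy_copy /=; lra.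
Qed.

Lemma law_A_same_channel : pS_X1 law_A = pS_X2 law_A.
Proof. by apply/ffunP => -[[] []]; compute_marginals; lra. Qed.

Lemma pS_X1_law_S :
  pS_X1 law_S = [ffun t : bool * bool * bool => 1/2 * pS_X1 law_A (t.1.1, t.2)].
Proof. by apply/ffunP => -[[[] []] []]; compute_marginals; lra. Qed.

Lemma mutinfo_law_S_law_A : mutinfo (pS_X1 law_S) = mutinfo (pS_X1 law_A).
Proof.
rewrite pS_X1_law_S (mutinfo_add_indep (u := fun _ : bool => 1/2 : R)) //.
by rewrite big_bool /=; lra.
Qed.

Lemma law_S_X2_rows_eq x2 : pS_X2 law_S (true, true, x2) = pS_X2 law_S (false, true, x2).
Proof. by case: x2; compute_marginals; lra. Qed.

Lemma law_S_X1_rows_neq : pS_X1 law_S (true, true, true) != pS_X1 law_S (false, true, true).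
Proof. by compute_marginals; apply/eqP; lra. Qed.

End Example.

Theorem corollary1 (R : realType) :
  ~ exists SI UI CI : infofun R,
      [/\ nonneg_decomposition SI UI CI, continuous_decomposition SI UI CI,
          blackwell UI & left_monotone SI].
Proof.
move=> [SI [UI [CI [dec _ bw lm]]]].
have law_A_dist : is_dist (law_A R) := dmap_dist _ (law_S_dist R).
have UI_A_eq0 := blackwell_UI_eq0_same_channel bw law_A_dist (law_A_same_channel R).
have SI_le := lm _ _ _ _ fst _ (law_S_dist R).
have [[_ [_ [UI_S_ge0 _]]] [_ [I_S _]]] := dec _ _ _ _ (law_S_dist R).
have [_ [_ [I_A _]]] := dec _ _ _ _ law_A_dist.
have UI_S_eq0 : UI _ _ _ (law_S R) = 0.
  by rewrite mutinfo_law_S_law_A I_A UI_A_eq0 in I_S; lra.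
have := blackwell_UI_eq0_rows bw (law_S_dist R) UI_S_eq0 (law_S_X2_rows_eq R) true.
by move/eqP; rewrite (negbTE (law_S_X1_rows_neq R)).
Qed.
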